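(* For real $u,w$ and an integer $n\ge1$ let $g_n(u,w):=\sum_{i=1}^n i\,w^{i-1}u^{n-i}$. Then for every odd integer $n\ge 5$, $$g_n(u,w)=(u^{n-1}+w^{n-1})+\sum_{i=1}^{(n-3)/2}u^{2i}w^{n-1-2i}+(u+w)\sum_{i=0}^{(n-3)/2}(n-1-2i)u^{2i}w^{n-2-2i}.$$ Furthermore, let $\beta>0$, $k>0$, and $w=\delta(u)$ with $\delta$ the involution defined in the context. Then for all odd integers $n\ge 3$: (i) if $-k<u_0<0$, then $g_n(u,w)>0$ for all $u\in(0,u_1)$; (ii) if $u_0<-k$, then $g_n(w,u)>0$ for all $u\in(0,k)$.
   Context: $\Phi(u)=\beta\left(-\frac{u^4}{4}+\frac{k+u_0}{3}u^3-\frac{ku_0}{2}u^2\right)$. Case $-k<u_0<0$: $u_1$ is the unique point of $(0,k)$ with $\Phi(u_1)=\Phi(u_0)$, and for $u\in(0,u_1)$, $\delta(u)$ is the unique $w\in(u_0,0)$ with $\Phi(w)=\Phi(u)$. Case $u_0<-k$: $w_2$ is the unique point of $(u_0,0)$ with $\Phi(w_2)=\Phi(k)$, and for $u\in(0,k)$, $\delta(u)$ is the unique $w\in(w_2,0)$ with $\Phi(w)=\Phi(u)$. *)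

From HB Require Import structures.
From mathcomp Require Import all_boot all_order all_algebra.
From mathcomp Require Import reals.
Set Implicit Arguments. Unset Strict Implicit. Unset Printing Implicit Defensive.
Import Order.TTheory GRing.Theory Num.Theory.
Local Open Scope ring_scope.

Definition gfun (R : realType) (n : nat) (u w : R) : R :=
  \sum_(1 <= i < n.+1) i%:R * w ^+ i.-1 * u ^+ (n - i).

Definition Phi (R : realType) (beta k u0 u : R) : R :=
  beta * (- u ^+ 4 / 4%:R + (k + u0) / 3%:R * u ^+ 3 - k * u0 / 2%:R * u ^+ 2).

From HB Require Import structures.
From mathcomp Require Import all_boot all_order all_algebra.
From mathcomp Require Import reals.
From mathcomp Require Import zify ring lra.
Import Order.TTheory GRing.Theory Num.Theory.
Local Open Scope ring_scope.

(* The identity follows by induction on n in steps of 2 from the recurrence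
   g_(n+2) = u^2 g_n + (n+1) u w^n + (n+2) w^(n+1).  For positivity, the
   closed form (w - u)^2 g_n = n w^(n+1) - (n+1) w^n u + u^(n+1) shows that
   g_n(u, w) > 0 whenever n is odd and u w < 0: all three terms are then
   nonnegative and the last one is positive.  In both cases (i) and (ii) the
   constraints on Phi only serve to put u and w on opposite sides of 0. *)

Section Gfun.

Variable R : realType.
Implicit Types u w : R.

Lemma gfun0 u w : gfun 0 u w = 0.
Proof. by rewrite /gfun big_geq. Qed.

Lemma gfunS n u w : gfun n.+1 u w = u * gfun n u w + n.+1%:R * w ^+ n.
Proof.
rewrite /gfun big_nat_recr //= subnn expr0 mulr1 big_distrr /=; congr (_ + _).
apply: eq_big_nat => i /andP [_ lt_i_Sn].
by rewrite subSn // exprS; ring.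
Qed.

Lemma gfunSS n u w :
  gfun n.+2 u w = u ^+ 2 * gfun n u w + n.+1%:R * u * w ^+ n + n.+2%:R * w ^+ n.+1.
Proof. by rewrite !gfunS; ring. Qed.

Lemma gfun_closed n u w :
  (w - u) ^+ 2 * gfun n u w = n%:R * w ^+ n.+1 - n.+1%:R * w ^+ n * u + u ^+ n.+1.
Proof.
elim: n => [|n IHn]; first by rewrite gfun0 expr0 expr1; ring.
by rewrite gfunS mulrDr mulrCA IHn !exprS -!natr1; ring.
Qed.

Lemma gfun_gt0 n u w : odd n -> u * w < 0 -> 0 < gfun n u w.
Proof.
move=> odd_n uw_lt0.
have u_neq0 : u != 0 by apply: contraTneq uw_lt0 => ->; rewrite mul0r ltxx.
have w_neq0 : w != 0 by apply: contraTneq uw_lt0 => ->; rewrite mulr0 ltxx.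
have wnu_lt0 : w ^+ n * u < 0.
  case: n odd_n => [//|n] /= even_n.
  have -> : w ^+ n.+1 * u = w ^+ n * (u * w) by rewrite exprS; ring.
  by rewrite pmulr_rlt0 // exprn_even_gt0 // w_neq0 orbT.
have even_Sn : ~~ odd n.+1 by rewrite /= odd_n.
have wu_neq0 : w - u != 0.
  by apply: contraTneq uw_lt0 => /subr0_eq ->; rewrite -expr2 exprn_even_lt0.
have sq_gt0 : 0 < (w - u) ^+ 2 by rewrite exprn_even_gt0 // wu_neq0 orbT.
rewrite -(pmulr_rgt0 _ sq_gt0) gfun_closed.
have wSn_gt0 : 0 < w ^+ n.+1 by rewrite exprn_even_gt0 // w_neq0 orbT.
have uSn_gt0 : 0 < u ^+ n.+1 by rewrite exprn_even_gt0 // u_neq0 orbT.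
have : 0 <= n%:R * w ^+ n.+1 :> R by rewrite mulr_ge0 // ltW.
have : 0 < n.+1%:R * - (w ^+ n * u) :> R by rewrite mulr_gt0 // oppr_gt0.
lra.
Qed.

Lemma sum_even_powers_shift n m u w :
  \sum_(1 <= i < m.+2) u ^+ (2 * i) * w ^+ (n.+2 - 1 - 2 * i)
  = u ^+ 2 * (w ^+ (n - 1) + \sum_(1 <= i < m.+1) u ^+ (2 * i) * w ^+ (n - 1 - 2 * i)).
Proof.
rewrite big_nat_recl // mulrDr big_distrr /=; congr (_ + _).
apply: eq_bigr => i _.
have -> : (n.+2 - 1 - 2 * i.+1 = n - 1 - 2 * i)%N by lia.
by rewrite mulnS exprD mulrA.
Qed.

Lemma sum_weighted_even_powers_shift n m u w :
  \sum_(0 <= i < m.+2) (n.+2 - 1 - 2 * i)%:R * u ^+ (2 * i) * w ^+ (n.+2 - 2 - 2 * i)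
  = n.+1%:R * w ^+ n
    + u ^+ 2 * \sum_(0 <= i < m.+1) (n - 1 - 2 * i)%:R * u ^+ (2 * i) * w ^+ (n - 2 - 2 * i).
Proof.
rewrite big_nat_recl // big_distrr /=; congr (_ + _).
  by rewrite muln0 expr0 mulr1; congr (_%:R * _ ^+ _); lia.
apply: eq_bigr => i _.
have -> : (n.+2 - 1 - 2 * i.+1 = n - 1 - 2 * i)%N by lia.
have -> : (n.+2 - 2 - 2 * i.+1 = n - 2 - 2 * i)%N by lia.
by rewrite mulnS exprD; ring.
Qed.

Lemma gfun_decomp_double m u w : let n := (m.*2 + 3)%N in
  gfun n u w =
    (u ^+ n.-1 + w ^+ n.-1)
    + \sum_(1 <= i < m.+1) u ^+ (2 * i) * w ^+ (n - 1 - 2 * i)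
    + (u + w) * \sum_(0 <= i < m.+1) (n - 1 - 2 * i)%:R * u ^+ (2 * i) * w ^+ (n - 2 - 2 * i).
Proof.
elim: m => [|m IHm] n; rewrite {}/n.
  by rewrite !gfunS gfun0 big_geq // big_nat1 -[(_ - 1 - _)%N]/2%N -[(_ - 2 - _)%N]/1%N; ring.
rewrite doubleS !addSn -/(_.+2) gfunSS IHm.
rewrite sum_even_powers_shift sum_weighted_even_powers_shift.
rewrite (addnS _ 2).
move: (m.*2 + 2)%N (\sum_(_ <= _ < _) _) (\sum_(_ <= _ < _) _) => a S1 S2.
by rewrite subn1 /= !exprS; ring.
Qed.

Lemma gfun_decomp n u w : odd n -> (3 <= n)%N ->
  gfun n u w =
    (u ^+ n.-1 + w ^+ n.-1)
    + \sum_(1 <= i < ((n - 3)./2).+1) u ^+ (2 * i) * w ^+ (n - 1 - 2 * i)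
    + (u + w) * \sum_(0 <= i < ((n - 3)./2).+1)
                 (n - 1 - 2 * i)%:R * u ^+ (2 * i) * w ^+ (n - 2 - 2 * i).
Proof.
move=> odd_n n_ge3.
have [m ->] : exists m, n = (m.*2 + 3)%N.
  by exists (n - 3)./2; have := odd_double_half (n - 3); rewrite oddB // odd_n /=; lia.
by rewrite addnK doubleK; apply: gfun_decomp_double.
Qed.

End Gfun.

Theorem lemma3p8 (R : realType) :
  (* the identity, for odd n >= 5 *)
  (forall (n : nat) (u w : R), odd n -> (5 <= n)%N ->
     gfun n u w =
       (u ^+ n.-1 + w ^+ n.-1)
       + \sum_(1 <= i < ((n - 3)./2).+1) u ^+ (2 * i) * w ^+ (n - 1 - 2 * i)
       + (u + w) * \sum_(0 <= i < ((n - 3)./2).+1)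
                    (n - 1 - 2 * i)%:R * u ^+ (2 * i) * w ^+ (n - 2 - 2 * i))
  /\
  (forall (beta k u0 : R), 0 < beta -> 0 < k ->
     (* (i) case -k < u0 < 0: u1 the point of (0,k) with Phi u1 = Phi u0,
        w = delta(u) the point of (u0,0) with Phi w = Phi u *)
     (- k < u0 -> u0 < 0 ->
        forall u1 : R, 0 < u1 -> u1 < k -> Phi beta k u0 u1 = Phi beta k u0 u0 ->
        forall (n : nat) (u w : R), odd n -> (3 <= n)%N ->
          0 < u -> u < u1 ->
          u0 < w -> w < 0 -> Phi beta k u0 w = Phi beta k u0 u ->
          0 < gfun n u w)
     /\
     (* (ii) case u0 < -k: w2 the point of (u0,0) with Phi w2 = Phi k,
        w = delta(u) the point of (w2,0) with Phi w = Phi u *)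
     (u0 < - k ->
        forall w2 : R, u0 < w2 -> w2 < 0 -> Phi beta k u0 w2 = Phi beta k u0 k ->
        forall (n : nat) (u w : R), odd n -> (3 <= n)%N ->
          0 < u -> u < k ->
          w2 < w -> w < 0 -> Phi beta k u0 w = Phi beta k u0 u ->
          0 < gfun n w u)).
Proof.
split=> [n u w odd_n n_ge5 | beta k u0 _ _].
  by apply: gfun_decomp => //; apply: leq_trans n_ge5.
split=> [_ _ u1 _ _ _ | _ w2 _ _ _] n u w odd_n _ u_gt0 _ _ w_lt0 _.
  by apply: gfun_gt0 => //; rewrite pmulr_rlt0.
by apply: gfun_gt0 => //; rewrite nmulr_rlt0.
Qed.
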